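(* Let $q\neq-1$ be real and $n\ge1$. Then $T_n(x,s,q)$ is the weight of the set of all tilings of an $n$-board whose last tile (the tile covering cell $n$) is either a white square or a domino. Consequently, for $n>0$, $$T_n(x,s,q)=x\,U_{n-1}(x,s,q)+q^{n-1}s\,U_{n-2}(x,s,q).$$
   Context: $T_0=1$, $T_1=x$, $T_n(x,s,q)=(1+q^{n-1})x\,T_{n-1}(x,s,q)+q^{n-1}s\,T_{n-2}(x,s,q)$ for $n\ge2$; $U_{-1}=0$, $U_0=1$, $U_n(x,s,q)=(1+q^{n})x\,U_{n-1}(x,s,q)+q^{n-1}s\,U_{n-2}(x,s,q)$ for $n\ge1$. An $n$-board is a $1\times n$ rectangle with cells $1,\dots,n$, tiled by white squares, black squares (one cell each) and dominoes (two adjacent cells). Weight: white square $x$; black square at cell $i$: $q^ix$; domino covering cells $i-1,i$: $q^{i-1}s$; a tiling's weight is the product of its tiles' weights and a set's weight is the sum over its elements. *)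

From HB Require Import structures.
From mathcomp Require Import all_boot all_order all_algebra.
Set Implicit Arguments. Unset Strict Implicit. Unset Printing Implicit Defensive.
Import Order.TTheory GRing.Theory Num.Theory.
Local Open Scope ring_scope.

Inductive tile := White | Black | Domino.

Definition tile_code (t : tile) : 'I_3 :=
  match t with White => inord 0 | Black => inord 1 | Domino => inord 2 end.
Definition tile_decode (i : 'I_3) : tile :=
  match val i with 0 => White | 1 => Black | _ => Domino end.
Lemma tile_codeK : cancel tile_code tile_decode.
Proof. by case; rewrite /tile_decode /= inordK. Qed.
HB.instance Definition _ := Countable.copy tile (can_type tile_codeK).
HB.instance Definition _ := Finite.copy tile (can_type tile_codeK).

Definition tile_len (t : tile) : nat := if t is Domino then 2 else 1.
Definition tiles_len (s : seq tile) : nat := sumn (map tile_len s).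

Section Weights.
Variable R : pzRingType.
Variables x s q : R.

(* weight of the tiling (sequence of tiles, left to right) placed after the
   first [off] cells: white square -> x; black square at cell i -> q^i x;
   domino covering cells i-1,i -> q^(i-1) s. *)
Fixpoint tiling_weight_from (off : nat) (t : seq tile) : R :=
  match t with
  | [::] => 1
  | White :: t' => x * tiling_weight_from off.+1 t'
  | Black :: t' => q ^+ off.+1 * x * tiling_weight_from off.+1 t'
  | Domino :: t' => q ^+ off.+1 * s * tiling_weight_from off.+2 t'
  end.

Definition tiling_weight (t : seq tile) : R := tiling_weight_from 0 t.

(* Weight of the set of tilings of an n-board satisfying P: a tiling of an
   n-board has at most n tiles, so we sum over all k-tuples of tiles, k <= n,
   covering exactly n cells. *)
Definition board_weight (n : nat) (P : seq tile -> bool) : R :=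
  \sum_(k < n.+1) \sum_(t : k.-tuple tile | (tiles_len t == n) && P t)
     tiling_weight t.

Fixpoint Tpoly (n : nat) : R :=
  match n with
  | 0 => 1
  | 1 => x
  | (k.+1 as m).+1 => (1 + q ^+ m) * x * Tpoly m + q ^+ m * s * Tpoly k
  end.

(* Uaux k = U_{k-1} *)
Fixpoint Uaux (k : nat) : R :=
  match k with
  | 0 => 0
  | 1 => 1
  | (j.+1 as m).+1 => (1 + q ^+ m) * x * Uaux m + q ^+ j * s * Uaux j
  end.

(* U_m for integer m >= -1 (U_{-1} = 0; other negative indices unused, set to 0) *)
Definition Upoly (m : int) : R :=
  match m with Posz n => Uaux n.+1 | Negz _ => 0 end.
End Weights.

Definition last_white_or_domino (t : seq tile) : bool :=
  match rev t with White :: _ | Domino :: _ => true | _ => false end.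

From HB Require Import structures.
From mathcomp Require Import all_boot all_order all_algebra.
From mathcomp Require Import reals ring.
Set Implicit Arguments. Unset Strict Implicit. Unset Printing Implicit Defensive.
Import Order.TTheory GRing.Theory Num.Theory.
Local Open Scope ring_scope.

(* Classifying tilings of an n-board by their last tile gives
   W_n = x W_{n-1} + q^n x W_{n-1} + q^(n-1) s W_{n-2} for the total weight W_n,
   which is the recurrence of U_n, so W_n = U_n.  Keeping only the white and
   domino endings gives x U_{n-1} + q^(n-1) s U_{n-2}, and an induction on the
   two recurrences shows that this is T_n. *)

Lemma perm_enum_tile : perm_eq (index_enum tile) [:: White; Black; Domino].
Proof.
have neq_tile (a b : tile) : a <> b -> (a == b) = false by move/eqP/negbTE.
apply: uniq_perm; first exact: index_enum_uniq.
  by rewrite /= !inE !neq_tile.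
by case; rewrite mem_index_enum !inE eqxx ?orbT.
Qed.

Lemma sum_tile (V : nmodType) (F : tile -> V) :
  \sum_(a : tile) F a = F White + F Black + F Domino.
Proof. by rewrite (perm_big _ perm_enum_tile) !big_cons big_nil /= addr0 addrA. Qed.

Lemma tiles_len_rcons t a : tiles_len (rcons t a) = (tiles_len t + tile_len a)%N.
Proof. by rewrite /tiles_len map_rcons -cats1 sumn_cat /= addn0. Qed.

Lemma size_le_tiles_len t : (size t <= tiles_len t)%N.
Proof.
elim: t => //= a t IH; rewrite /tiles_len /= -/(tiles_len t).
by case: a => /=; rewrite ?add1n ?add2n ltnS // ltnW.
Qed.

Lemma sum_tuple_rcons (V : nmodType) k (P : pred (seq tile)) (F : seq tile -> V) :
  \sum_(t : k.+1.-tuple tile | P t) F t =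
  \sum_(t : k.-tuple tile) \sum_(a : tile | P (rcons t a)) F (rcons t a).
Proof.
rewrite pair_big_dep.
pose split_last (t : k.+1.-tuple tile) :=
  (belast_tuple (thead t) (behead_tuple t), last (thead t) (behead_tuple t)).
rewrite (reindex (fun p : k.-tuple tile * tile => rcons_tuple p.1 p.2)) //.
exists split_last => [[t a] _ | t _]; rewrite /split_last /=.
  case: t => -[|b t] Ht; rewrite /thead (tnth_nth a) /=.
    by congr pair; apply: val_inj.
  by congr pair; [apply: val_inj; rewrite /= belast_rcons | rewrite last_rcons].
by apply/val_inj; rewrite /= -lastI [in RHS](tuple_eta t).
Qed.

Section LastTile.
Variables (R : pzRingType) (x s q : R).

(* [i] counts the cells before the tile, so a black square lands on cell [i.+1]. *)
Definition tile_weight (i : nat) (a : tile) : R :=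
  match a with White => x | Black => q ^+ i.+1 * x | Domino => q ^+ i.+1 * s end.

Local Notation weight := (tiling_weight x s q).
Local Notation bweight := (board_weight x s q).

Lemma tiling_weight_from_rcons off t a :
  tiling_weight_from x s q off (rcons t a) =
  tiling_weight_from x s q off t * tile_weight (off + tiles_len t) a.
Proof.
elim: t off => [|b t IH] off /=; first by rewrite addn0 mul1r; case: a; rewrite /= mulr1.
rewrite /tiles_len /= -/(tiles_len t).
by case: b; rewrite /= IH mulrA addnA ?addn1 ?addn2.
Qed.

Lemma tiling_weight_rcons t a :
  weight (rcons t a) = weight t * tile_weight (tiles_len t) a.
Proof. exact: tiling_weight_from_rcons. Qed.

Lemma eq_board_weight n (P1 P2 : pred (seq tile)) :
  P1 =1 P2 -> bweight n P1 = bweight n P2.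
Proof. by move=> eqP12; apply: eq_bigr => k _; apply: eq_bigl => t; rewrite eqP12. Qed.

Lemma board_weight_pred0 n : bweight n xpred0 = 0.
Proof. by apply: big1 => k _; rewrite big_pred0 // => t; rewrite andbF. Qed.

Lemma board_weight0 : bweight 0 xpredT = 1.
Proof.
rewrite /board_weight big_ord1 (big_pred1 [tuple]) //.
by move=> t; rewrite tuple0 /= eqxx.
Qed.

(* A tiling of an n-board has at most n tiles. *)
Lemma board_weight_widen n b P : (n < b)%N ->
  bweight n P =
  \sum_(k < b) \sum_(t : k.-tuple tile | (tiles_len t == n) && P t) weight t.
Proof.
move=> ltnb; rewrite /board_weight.
rewrite (big_ord_widen b (fun k : nat =>
  \sum_(t : k.-tuple tile | (tiles_len t == n) && P t) weight t) ltnb) big_mkcond.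
apply: eq_bigr => k _; case: ltnP => // ltnk; rewrite big1 // => t /andP[/eqP lent _].
by have := size_le_tiles_len t; rewrite size_tuple lent leqNgt ltnk.
Qed.

Lemma board_weight_last n P : (0 < n)%N ->
  bweight n P =
  \sum_(a : tile | (tile_len a <= n)%N)
    bweight (n - tile_len a) (fun t => P (rcons t a)) * tile_weight (n - tile_len a) a.
Proof.
move=> n_gt0; rewrite {1}/board_weight big_ord_recl big_pred0 ?add0r /=; last first.
  by move=> t; rewrite tuple0 /tiles_len /=; case: (n) n_gt0.
under eq_bigr => i _ do
  rewrite -[bump 0 i]/(i.+1) (sum_tuple_rcons _ (fun t => (tiles_len t == n) && P t)).
under eq_bigr do under eq_bigr do rewrite big_mkcond.
under eq_bigr do rewrite exchange_big /=.
rewrite exchange_big [RHS]big_mkcond /=; apply: eq_bigr => a _.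
case: leqP => [len_a | lt_n_a]; last first.
  rewrite big1 // => k _; rewrite big1 // => t _.
  by rewrite tiles_len_rcons gtn_eqF ?andFb // (leq_trans lt_n_a) ?leq_addl.
have lt_n_len : (n - tile_len a < n)%N by rewrite ltn_subrL n_gt0; case: (a).
rewrite (board_weight_widen _ lt_n_len) mulr_suml.
apply: eq_bigr => k _; rewrite mulr_suml [RHS]big_mkcond; apply: eq_bigr => t _.
rewrite tiles_len_rcons tiling_weight_rcons.
have -> : (tiles_len t + tile_len a == n)%N = (tiles_len t == n - tile_len a)%N.
  by rewrite -[RHS](eqn_add2r (tile_len a)) subnK.
by case: eqP => // ->.
Qed.
End LastTile.

Lemma last_white_or_domino_rcons t a :
  last_white_or_domino (rcons t a) = if a is Black then false else true.
Proof. by rewrite /last_white_or_domino rev_rcons; case: a. Qed.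

Section Recurrences.
Variables (R : comPzRingType) (x s q : R).

Local Notation bweight := (board_weight x s q).
Local Notation U := (Uaux x s q).

Lemma UauxSS n : U n.+2 = (1 + q ^+ n.+1) * x * U n.+1 + q ^+ n * s * U n.
Proof. by []. Qed.

Lemma board_weight_predT n : bweight n xpredT = U n.+1.
Proof.
elim/ltn_ind: n => -[|[|n]] IH; first exact: board_weight0.
  by rewrite board_weight_last // big_mkcond sum_tile /= subnn board_weight0; ring.
rewrite UauxSS board_weight_last // big_mkcond sum_tile [LHS]/= !subSS !subn0 !IH //.
ring.
Qed.

Lemma board_weight_last_white_or_domino n :
  bweight n.+1 last_white_or_domino = x * U n.+1 + q ^+ n * s * U n.
Proof.
rewrite board_weight_last // big_mkcond sum_tile [LHS]/= subSS subn0.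
rewrite !(eq_board_weight x s q _ (last_white_or_domino_rcons^~ _)) [LHS]/=.
rewrite board_weight_pred0 mul0r addr0 board_weight_predT.
case: n => [|n]; first by rewrite /=; ring.
by rewrite -[(1 < n.+2)%N]/true !subSS subn0 board_weight_predT; ring.
Qed.

Lemma TpolySS n :
  Tpoly x s q n.+2 =
  (1 + q ^+ n.+1) * x * Tpoly x s q n.+1 + q ^+ n.+1 * s * Tpoly x s q n.
Proof. by []. Qed.

Lemma Tpoly_Uaux n : Tpoly x s q n.+1 = x * U n.+1 + q ^+ n * s * U n.
Proof.
elim/ltn_ind: n => -[|[|n]] IH; try by rewrite /=; ring.
by rewrite TpolySS !IH // !UauxSS; ring.
Qed.

End Recurrences.

Lemma Upoly_pred (R : pzRingType) (x s q : R) n :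
  Upoly x s q (n%:Z - 1) = Uaux x s q n.
Proof. by case: n => [|n]; rewrite ?sub0r -?[-1]/(Negz 0) // intS [1 + _]addrC addrK. Qed.

Theorem theorem2p4 (R : realType) (x s q : R) (hq : q != -1) (n : nat)
    (hn : (1 <= n)%N) :
  Tpoly x s q n = board_weight x s q n last_white_or_domino /\
  Tpoly x s q n =
    x * Upoly x s q (n%:Z - 1) + q ^+ n.-1 * s * Upoly x s q (n%:Z - 2).
Proof.
case: n hn => // n _; rewrite Tpoly_Uaux board_weight_last_white_or_domino.
split=> //; rewrite Upoly_pred.
have -> : n.+1%:Z - 2 = n%:Z - 1 by rewrite intS; ring.
by rewrite Upoly_pred.
Qed.
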